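(* Let $n\ge 1$. Under the restriction map $H^\bullet(\Gamma_{n+1};\mathbb{Q}_{\mathrm{sgn}})\to H^\bullet(\Gamma_n;\mathbb{Q}_{\mathrm{sgn}})$ induced by the natural inclusion $\Gamma_n\hookrightarrow\Gamma_{n+1}$: if $\mathcal D\in\mathcal D^{\mathrm{sgn}}_{n+1}$ has exactly one isolated vertex, then $\alpha^{\mathrm{sgn}}_{\mathcal D}$ restricts to $\alpha^{\mathrm{sgn}}_{\mathcal D'}$, where $\mathcal D'\in\mathcal D^{\mathrm{sgn}}_n$ is obtained by deleting the isolated vertex; if $\mathcal D$ has no isolated vertex, $\alpha^{\mathrm{sgn}}_{\mathcal D}$ restricts to $0$. In particular the restriction map is injective on the subspace spanned by the classes $\alpha^{\mathrm{sgn}}_{\mathcal D}$ with $\mathcal D$ having exactly one isolated vertex.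
   Context: $\Gamma_n=\mathrm{Br}_n/[P_n,P_n]$, $\mathbb{Z}\mathcal A_n=P_n/[P_n,P_n]$. $\mathbb{Q}_{\mathrm{sgn}}$ is the sign representation of $S_n$ viewed as a $\Gamma_n$-module; $H^\bullet(\Gamma_n;\mathbb{Q}_{\mathrm{sgn}})$ is identified via restriction with $H^\bullet(\mathbb{Z}\mathcal A_n;\mathbb{Q}_{\mathrm{sgn}})^{S_n}$, and $H^\bullet(\mathbb{Z}\mathcal A_n;\mathbb{Q}_{\mathrm{sgn}})=\mathbb{Q}_{\mathrm{sgn}}\otimes\Lambda^\bullet$ where $\Lambda^\bullet$ is the exterior algebra on $\omega_{ij}$ ($1\le i<j\le n$) with $\sigma(\omega_{ij})=\omega_{\sigma(i)\sigma(j)}$ if $\sigma(i)<\sigma(j)$, $\omega_{\sigma(j)\sigma(i)}$ otherwise. The inclusion $\Gamma_n\hookrightarrow\Gamma_{n+1}$ comes from adding a strand; restriction sends $\omega_{ij}$ ($j\le n$) to $\omega_{ij}$ and $\omega_{i,n+1}$ to $0$. For a simple graph $\Delta$ on $\{1,\dots,n\}$ with lexicographically ordered edges $(i_1,j_1),\dots,(i_k,j_k)$, $\mu_\Delta=\omega_{i_1j_1}\cdots\omega_{i_kj_k}$. A graph with $n$ vertices is skew-invariant if every automorphism $\sigma$ satisfies $\mathrm{sgn}(\sigma)\mathrm{sgn}_\Delta(\sigma)=1$, with $\mathrm{sgn}(\sigma)$ the sign on vertices and $\mathrm{sgn}_\Delta(\sigma)$ the sign of the induced edge permutation; $\mathcal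 D^{\mathrm{sgn}}_n$ is the set of their isomorphism classes. Representatives are chosen coherently: for each class $\mathcal G_0$ without isolated vertices a representative on $\{1,\dots,|V\mathcal G_0|\}$ is fixed, and the representative $\Delta_{\mathcal D}$ of a class on $n$ vertices with non-isolated part $\mathcal G_0$ adds vertices $|V\mathcal G_0|+1,\dots,n$ as isolated vertices. $\alpha^{\mathrm{sgn}}_{\mathcal D}=\frac{1}{|\mathrm{Stab}_{S_n}(\Delta_{\mathcal D})|}\sum_{\sigma\in S_n}\sigma(\mu_{\Delta_{\mathcal D}})$ computed in $H^\bullet(\mathbb{Z}\mathcal A_n;\mathbb{Q}_{\mathrm{sgn}})$; these classes for $\mathcal D\in\mathcal D^{\mathrm{sgn}}_n$ form a basis of $H^\bullet(\Gamma_n;\mathbb{Q}_{\mathrm{sgn}})$. *)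

From HB Require Import structures.
From mathcomp Require Import all_boot all_order all_algebra all_fingroup.
Set Implicit Arguments. Unset Strict Implicit. Unset Printing Implicit Defensive.
Import Order.TTheory GRing.Theory Num.Theory.
Local Open Scope ring_scope.

(* Vertices {1,..,n} are modelled by 'I_n = {0,..,n-1}.  A (normalized) edge
   is a pair (i,j) with i < j, standing for omega_{ij}. *)
Definition edge (n : nat) := ('I_n * 'I_n)%type.

Definition graph (n : nat) := {set edge n}.
Definition wf_graph n (G : graph n) : bool :=
  [forall e in G, (e.1 < e.2)%N].

Definition ltE n (a b : edge n) : bool :=
  ((a.1 < b.1)%N || ((a.1 == b.1) && (a.2 < b.2)%N)).
Definition leE n (a b : edge n) : bool := ~~ ltE b a.

Definition sorted_edges n (G : graph n) : seq (edge n) := sort (@leE n) (enum G).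

Fixpoint inv_count n (s : seq (edge n)) : nat :=
  match s with
  | [::] => 0
  | x :: s' => (count (fun y => ltE y x) s' + inv_count s')%N
  end.

(* The exterior algebra Lambda^* on the omega_{ij}: the rational vector space
   with basis the monomials omega_S (S a set of normalized edges, product taken
   in lexicographic order). *)
Notation Lambda n := {ffun {set edge n} -> rat^o}.
Definition basisL n (S : {set edge n}) : Lambda n := [ffun T => (T == S)%:R].

(* the product omega_{e_1} ... omega_{e_k} of a sequence of normalized edges *)
Definition wedge n (s : seq (edge n)) : Lambda n :=
  if uniq s then (-1) ^+ inv_count s *: basisL [set x in s] else 0.

Definition mu n (G : graph n) : Lambda n := wedge (sorted_edges G).

Definition act_edge n (s : 'S_n) (e : edge n) : edge n :=
  if (s e.1 < s e.2)%N then (s e.1, s e.2) else (s e.2, s e.1).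

(* action of sigma on Q_sgn (x) Lambda: sgn(sigma) times the algebra
   automorphism induced on Lambda *)
Definition actL n (s : 'S_n) (x : Lambda n) : Lambda n :=
  \sum_(S : {set edge n}) x S *: wedge (map (act_edge s) (sorted_edges S)).
Definition act_sgn n (s : 'S_n) (x : Lambda n) : Lambda n :=
  (-1) ^+ odd_perm s *: actL s x.

Definition Stab n (G : graph n) : {set 'S_n} :=
  [set s : 'S_n | [set act_edge s e | e in G] == G].

Definition edge_sign n (G : graph n) (s : 'S_n) : int :=
  (-1) ^+ inv_count (map (act_edge s) (sorted_edges G)).

Definition skew_invariant n (G : graph n) : bool :=
  [forall s in Stab G, ((-1) ^+ odd_perm s * edge_sign G s == 1 :> int)].

Definition alpha n (G : graph n) : Lambda n :=
  (#|Stab G|%:R)^-1 *: \sum_(s : 'S_n) act_sgn s (mu G).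

Definition isolated n (G : graph n) (v : 'I_n) : bool :=
  [forall e in G, (e.1 != v) && (e.2 != v)].

Definition wid n (i : 'I_n) : 'I_n.+1 := widen_ord (leqnSn n) i.
Definition wid_edge n (e : edge n) : edge n.+1 := (wid e.1, wid e.2).

(* restriction Lambda_{n+1} -> Lambda_n: omega_{ij} |-> omega_{ij} for j <= n,
   omega_{i,n+1} |-> 0; on monomials omega_T |-> omega_S if T = S (widened),
   0 if T involves the last vertex *)
Definition res n (x : Lambda n.+1) : Lambda n :=
  [ffun S : {set edge n} => x [set wid_edge e | e in S]].

Definition del_last n (G : graph n.+1) : graph n :=
  [set e : edge n | wid_edge e \in G].

(* As mu_Delta is the basis monomial omega_Delta, the coefficient of
   alpha_Delta at a graph E is |Stab Delta|^-1 times a signed count of the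
   sigma with sigma(Delta) = E; restriction reads off the coefficients at the
   graphs in which the last vertex is isolated.  If Delta has no isolated
   vertex, neither has any sigma(Delta).  If the last vertex is the only
   isolated vertex of Delta, the sigma involved fix it, so they are the lifts of
   the permutations of the first n vertices, with the same signs.  For
   injectivity, a combination of such classes has coefficients at E and at
   tau(E) that differ by a sign, and each graph of its support has an isolated
   vertex, which a transposition tau moves to the last position. *)

From HB Require Import structures.
From mathcomp Require Import all_boot all_order all_algebra all_fingroup.
From mathcomp Require Import zify.
Set Implicit Arguments. Unset Strict Implicit. Unset Printing Implicit Defensive.
Import Order.TTheory GRing.Theory Num.Theory.
Local Open Scope ring_scope.

Fixpoint inversions (T : Type) (r : rel T) (u : seq T) : nat :=
  if u is x :: u' then (count (r^~ x) u' + inversions r u')%N else 0%N.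

Lemma inversions_map (T U : Type) (r : rel U) (f : T -> U) u :
  inversions r (map f u) = inversions (relpre f r) u.
Proof. by elim: u => //= x u ->; rewrite count_map. Qed.

Section Parity.
Variable T : eqType.
Implicit Types (r : rel T) (x : T) (u v w : seq T).

Lemma inversions_insert r v1 x v2 :
  inversions r (v1 ++ x :: v2) =
  (count (r x) v1 + count (r^~ x) v2 + inversions r (v1 ++ v2))%N.
Proof. by elim: v1 => [|y v1 IH] //=; rewrite IH !count_cat /=; lia. Qed.

Lemma odd_count_rel_flip r x w : {in w, forall y, r y x = ~~ r x y} ->
  odd (count (r x) w) = odd (size w) (+) odd (count (r^~ x) w).
Proof. by move/eq_in_count->; rewrite -(count_predC (r x) w) oddD addbK. Qed.

(* Modulo 2, [inversions r1 u + inversions r2 u] counts the pairs on which the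
   tournaments [r1] and [r2] disagree, which does not depend on the order of [u]. *)
Lemma odd_inversionsD_perm r1 r2 u v : uniq u -> perm_eq u v ->
  {in u &, forall x y, x != y -> r1 y x = ~~ r1 x y} ->
  {in u &, forall x y, x != y -> r2 y x = ~~ r2 x y} ->
  odd (inversions r1 u + inversions r2 u) = odd (inversions r1 v + inversions r2 v).
Proof.
elim: u v => [|x u IH] v; first by move=> _ /perm_size; case: v.
rewrite cons_uniq => /andP[xNu uniq_u] uv tot1 tot2.
have x_v : x \in v by rewrite -(perm_mem uv) mem_head.
move: uv; case/splitPr: x_v => v1 v2 uv.
have uv12 : perm_eq u (v1 ++ v2).
  by rewrite -(perm_cons x) (permPl uv) -cat1s perm_catCA.
have xNv1 : x \notin v1.
  have : uniq (v1 ++ x :: v2) by rewrite -(perm_uniq uv) /= xNu.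
  by rewrite cat_uniq /= negb_or => /and3P[_ /andP[]].
have sub_u : {subset u <= x :: u} by move=> y y_u; rewrite inE y_u orbT.
have flip_x r : {in x :: u &, forall x y, x != y -> r y x = ~~ r x y} ->
    odd (count (r x) v1) = odd (size v1) (+) odd (count (r^~ x) v1).
  move=> tot; apply: odd_count_rel_flip => y y_v1; apply: tot; rewrite ?mem_head //.
    by rewrite (perm_mem uv) mem_cat y_v1.
  by apply: contraNneq xNv1 => ->.
have IHu := IH _ uniq_u uv12 (sub_in2 sub_u tot1) (sub_in2 sub_u tot2).
have count_u r : count (r^~ x) u = (count (r^~ x) v1 + count (r^~ x) v2)%N.
  by rewrite (seq.permP uv12) count_cat.
move: IHu; rewrite /= !inversions_insert !count_u !oddD (flip_x _ tot1) (flip_x _ tot2).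
by do 9![case: (odd _)].
Qed.

End Parity.

Section EdgeOrder.
Variable m : nat.
Implicit Types (a b e : edge m) (G : graph m) (u : seq (edge m)).

Definition edge_key e : nat := (e.1 * m + e.2)%N.

Lemma ltE_key a b : ltE a b = (edge_key a < edge_key b)%N.
Proof.
rewrite /ltE /edge_key -val_eqE /=.
have := ltn_ord a.2; have := ltn_ord b.2.
case: (ltngtP a.1 b.1) => [lt_ab|lt_ba|->] /= *; last by rewrite ltn_add2l.
- by symmetry; apply/idP; nia.
- by symmetry; apply/negbTE; rewrite -leqNgt; nia.
Qed.

Lemma edge_key_inj : injective edge_key.
Proof.
move=> [a1 a2] [b1 b2]; rewrite /edge_key /= => eq_key.
have m_gt0 : (0 < m)%N by apply: leq_ltn_trans (ltn_ord a1).
have eq1 : a1 = b1 :> nat.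
  by have := congr1 (divn^~ m) eq_key; rewrite !divnMDl // !divn_small ?addn0.
have eq2 : a2 = b2 :> nat.
  by have := congr1 (modn^~ m) eq_key; rewrite !modnMDl !modn_small.
by congr pair; apply: val_inj.
Qed.

Lemma ltE_asym a b : a != b -> ltE b a = ~~ ltE a b.
Proof.
by move=> neq_ab; rewrite !ltE_key ltnNge ltn_neqAle (inj_eq edge_key_inj) neq_ab.
Qed.

Lemma leE_trans : transitive (@leE m).
Proof. by move=> b a c; rewrite /leE !ltE_key -!leqNgt; apply: leq_trans. Qed.

Lemma leE_total : total (@leE m).
Proof. by move=> a b; rewrite /leE !ltE_key -!leqNgt; apply: leq_total. Qed.

Lemma leE_anti : antisymmetric (@leE m).
Proof.
by move=> a b; rewrite /leE !ltE_key -!leqNgt -eqn_leq => /eqP/edge_key_inj.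
Qed.

Lemma inv_count_inversions u : inv_count u = inversions (@ltE m) u.
Proof. by elim: u => //= e u ->. Qed.

Lemma mem_sorted_edges G : sorted_edges G =i G.
Proof. by move=> e; rewrite mem_sort mem_enum. Qed.

Lemma uniq_sorted_edges G : uniq (sorted_edges G).
Proof. by rewrite sort_uniq enum_uniq. Qed.

Lemma sorted_sorted_edges G : sorted (@leE m) (sorted_edges G).
Proof. exact/sort_sorted/leE_total. Qed.

Lemma sorted_edges_unique G u : uniq u -> u =i G -> sorted (@leE m) u ->
  u = sorted_edges G.
Proof.
move=> uniq_u u_G sorted_u.
apply: (sorted_eq leE_trans leE_anti sorted_u (sorted_sorted_edges G)).
by apply: uniq_perm; rewrite ?uniq_sorted_edges // => e; rewrite u_G mem_sorted_edges.
Qed.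

Lemma inv_count_sorted u : sorted (@leE m) u -> inv_count u = 0%N.
Proof.
rewrite sorted_pairwise; last exact: leE_trans.
elim: u => //= e u IH /andP[/allP le_e pw_u]; rewrite IH // addn0.
by apply/eqP; rewrite -leqn0 leqNgt -has_count; apply/hasP => -[y /le_e /negP].
Qed.

Lemma mu_basis G : mu G = basisL G.
Proof.
rewrite /mu /wedge uniq_sorted_edges inv_count_sorted ?sorted_sorted_edges //.
by rewrite scale1r; congr basisL; apply/setP => e; rewrite inE mem_sorted_edges.
Qed.

End EdgeOrder.

Section EdgeAction.
Variable m : nat.
Implicit Types (e : edge m) (G E : graph m) (s t : 'S_m) (v : 'I_m).

Definition normal_edge e := (e.1 < e.2)%N.

Definition act_graph s G : graph m := [set act_edge s e | e in G].

Lemma wf_graphP G : reflect {in G, forall e, normal_edge e} (wf_graph G).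
Proof. exact: forall_inP. Qed.

Definition edge_of (x y : 'I_m) : edge m := if (x < y)%N then (x, y) else (y, x).

Lemma edge_ofC x y : edge_of x y = edge_of y x.
Proof. by rewrite /edge_of; case: ltngtP => // /val_inj->. Qed.

Lemma act_edgeE s e : act_edge s e = edge_of (s e.1) (s e.2).
Proof. by []. Qed.

Lemma normal_act_edge s e : normal_edge e -> normal_edge (act_edge s e).
Proof.
rewrite /normal_edge act_edgeE /edge_of => lt_e.
case: (ltngtP (s e.1) (s e.2)) => //= /val_inj/perm_inj eq_e.
by rewrite eq_e ltnn in lt_e.
Qed.

Lemma act_edge_inj s : {in normal_edge &, injective (act_edge s)}.
Proof.
move=> [a1 a2] [b1 b2]; rewrite !unfold_in /normal_edge !act_edgeE /edge_of /=.
move=> lt_a lt_b.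
do 2!case: ifP => _; case=> /perm_inj ? /perm_inj ?; subst => //.
all: by have := ltn_trans lt_a lt_b; rewrite ltnn.
Qed.

Lemma act_edge1 e : normal_edge e -> act_edge 1 e = e.
Proof. by case: e => a b; rewrite /normal_edge act_edgeE /edge_of !perm1 /= => ->. Qed.

Lemma act_edgeM s t e : act_edge (s * t) e = act_edge t (act_edge s e).
Proof.
rewrite act_edgeE !permM [act_edge s e]act_edgeE {2}/edge_of.
by case: ifP => _; rewrite act_edgeE // edge_ofC.
Qed.

Lemma wf_act_graph s G : wf_graph G -> wf_graph (act_graph s G).
Proof.
move/wf_graphP=> wfG; apply/wf_graphP=> _ /imsetP[e /wfG e_n ->].
exact: normal_act_edge.
Qed.

Lemma act_graphM s t G : act_graph (s * t) G = act_graph t (act_graph s G).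
Proof. by rewrite /act_graph -imset_comp; apply: eq_imset => e; rewrite act_edgeM. Qed.

Lemma act_graph1 G : wf_graph G -> act_graph 1 G = G.
Proof.
move/wf_graphP=> wfG; rewrite -[RHS]imset_id.
by apply: eq_in_imset => e /wfG /act_edge1.
Qed.

Lemma act_graphK s G : wf_graph G -> act_graph s^-1%g (act_graph s G) = G.
Proof. by move=> wfG; rewrite -act_graphM mulgV act_graph1. Qed.

Lemma act_graph_inj s G E : wf_graph G -> wf_graph E ->
  act_graph s G = act_graph s E -> G = E.
Proof. by move=> wfG wfE eq_sGE; rewrite -(act_graphK s wfG) eq_sGE act_graphK. Qed.

Lemma isolated_act_graph s G v : isolated G v -> isolated (act_graph s G) (s v).
Proof.
move/forall_inP=> isoG; apply/forall_inP=> _ /imsetP[e /isoG /andP[e1v e2v] ->].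
by rewrite act_edgeE /edge_of; case: ifP => _ /=; rewrite !(inj_eq perm_inj) e1v e2v.
Qed.

Lemma isolated_act_graphV s G v : wf_graph G ->
  isolated (act_graph s G) v -> isolated G (s^-1%g v).
Proof. by move=> wfG /(isolated_act_graph s^-1%g); rewrite act_graphK. Qed.

End EdgeAction.

Section AlphaCoefficients.
Variable m : nat.
Implicit Types (G E : graph m) (s t : 'S_m).

Definition act_sign s G : rat :=
  (-1) ^+ odd_perm s * (-1) ^+ inv_count (map (act_edge s) (sorted_edges G)).

Lemma act_sign_neq0 s G : act_sign s G != 0.
Proof. by rewrite mulf_neq0 ?signr_eq0. Qed.

Lemma uniq_map_act_edge s G : wf_graph G -> uniq (map (act_edge s) (sorted_edges G)).
Proof.
move/wf_graphP=> wfG; rewrite map_inj_in_uniq ?uniq_sorted_edges // => a b a_G b_G.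
by apply: act_edge_inj; rewrite unfold_in; apply: wfG; rewrite -mem_sorted_edges.
Qed.

Lemma mem_map_act_edge s G : map (act_edge s) (sorted_edges G) =i act_graph s G.
Proof.
move=> e; apply/mapP/imsetP => -[x x_G ->]; exists x => //.
  by rewrite -mem_sorted_edges.
by rewrite mem_sorted_edges.
Qed.

Lemma act_sgn_basis s G : wf_graph G ->
  act_sgn s (basisL G) = act_sign s G *: basisL (act_graph s G).
Proof.
move=> wfG; rewrite /act_sgn /actL (bigD1 G) //= big1 => [|S /negbTE nS]; last first.
  by rewrite ffunE nS scale0r.
rewrite ffunE eqxx scale1r addr0 /wedge uniq_map_act_edge // scalerA.
by congr (_ *: basisL _); apply/setP => e; rewrite inE mem_map_act_edge.
Qed.

Lemma alpha_coef G E : wf_graph G ->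
  alpha G E = #|Stab G|%:R^-1 * \sum_(s | act_graph s G == E) act_sign s G.
Proof.
move=> wfG; rewrite /alpha ffunE sum_ffunE [in RHS]big_mkcond /=; congr (_ * _).
apply: eq_bigr => s _; rewrite mu_basis act_sgn_basis // !ffunE eq_sym.
by case: eqP => _; [exact: mulr1 | exact: mulr0].
Qed.

Lemma alpha_neq0_orbit G E : wf_graph G -> alpha G E != 0 ->
  exists s, E = act_graph s G.
Proof.
move=> wfG; case: (pickP [pred s | act_graph s G == E]) => [s /eqP<- _|no_s].
  by exists s.
by rewrite alpha_coef // big_pred0 ?mulr0 ?eqxx.
Qed.

Lemma odd_inv_count_act_perm t u E : wf_graph E -> uniq u ->
  perm_eq u (sorted_edges E) ->
  odd (inv_count (map (act_edge t) u)) =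
  odd (inv_count u) (+) odd (inv_count (map (act_edge t) (sorted_edges E))).
Proof.
move=> /wf_graphP wfE uniq_u u_E.
have normal_u : {in u, forall e, normal_edge e}.
  by move=> e; rewrite (perm_mem u_E) mem_sorted_edges; apply: wfE.
have := @odd_inversionsD_perm _ (@ltE m) (relpre (act_edge t) (@ltE m)) _ _ uniq_u u_E.
rewrite -[inversions _ (sorted_edges E)]inv_count_inversions.
rewrite inv_count_sorted ?sorted_sorted_edges // add0n oddD.
rewrite !inv_count_inversions !inversions_map => <- //; first by rewrite addKb.
  by move=> a b _ _; apply: ltE_asym.
move=> a b a_u b_u neq_ab; apply: ltE_asym; apply: contra neq_ab => /eqP eq_t.
by rewrite (act_edge_inj (normal_u a a_u) (normal_u b b_u) eq_t).
Qed.

Lemma act_signM s t G : wf_graph G ->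
  act_sign (s * t) G = act_sign s G * act_sign t (act_graph s G).
Proof.
move=> wfG; set u := map (act_edge s) (sorted_edges G).
have u_sG : perm_eq u (sorted_edges (act_graph s G)).
  apply: uniq_perm; rewrite ?uniq_map_act_edge ?uniq_sorted_edges // => e.
  by rewrite mem_map_act_edge mem_sorted_edges.
rewrite /act_sign -/u.
have -> : map (act_edge (s * t)) (sorted_edges G) = map (act_edge t) u.
  by rewrite -map_comp; apply: eq_map => e; rewrite /= act_edgeM.
rewrite odd_permM signr_addb -[(-1) ^+ inv_count (map _ u)]signr_odd.
rewrite (odd_inv_count_act_perm t (wf_act_graph s wfG) (uniq_map_act_edge s wfG) u_sG).
by rewrite signr_addb !signr_odd -/u mulrACA.
Qed.

Lemma alpha_act_graph G E t : wf_graph G -> wf_graph E ->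
  alpha G (act_graph t E) = act_sign t E * alpha G E.
Proof.
move=> wfG wfE; rewrite !alpha_coef // [RHS]mulrCA; congr (_ * _).
have orbit_t s : (act_graph (s * t) G == act_graph t E) = (act_graph s G == E).
  rewrite act_graphM; apply/eqP/eqP => [|-> //].
  by apply: act_graph_inj; rewrite ?wf_act_graph.
rewrite big_distrr (reindex_inj (mulIg t)) /=; apply: eq_big => s; rewrite orbit_t //.
by move=> /eqP sG_E; rewrite act_signM // sG_E mulrC.
Qed.

End AlphaCoefficients.

Lemma big_fix_lift_perm (R : Type) (idx : R) (op : Monoid.com_law idx) n
    (i : 'I_n.+1) (P : pred 'S_n.+1) (F : 'S_n.+1 -> R) :
  \big[op/idx]_(σ : 'S_n.+1 | (σ i == i) && P σ) F σ =
  \big[op/idx]_(s : 'S_n | P (lift_perm i i s)) F (lift_perm i i s).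
Proof.
rewrite (reindex (lift_perm i i)) => [|/=].
  by apply: eq_bigl => s; rewrite lift_perm_id eqxx.
pose unlift_fun j (σ : 'S_n.+1) k := odflt k (unlift (σ j) (σ (lift j k))).
have unlift_funK j (σ : 'S_n.+1) k : lift (σ j) (unlift_fun j σ k) = σ (lift j k).
  rewrite /unlift_fun; have:= neq_lift j k.
  by rewrite -(can_eq (permK σ)) => /unlift_some[] ? ? ->.
have inj_unlift_fun : injective (unlift_fun i _).
  move=> σ; apply: can_inj (unlift_fun (σ i) σ^-1%g) _ => k.
  by rewrite {1}/unlift_fun unlift_funK !permK liftK.
exists (fun σ => perm (inj_unlift_fun σ)) => [s _ | σ /andP[/eqP σi _]].
  by apply/permP=> k; rewrite permE /unlift_fun lift_perm_lift lift_perm_id liftK.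
apply/permP=> k; case: (unliftP i k) => [k'|] ->; rewrite ?lift_perm_id //.
by rewrite lift_perm_lift -{1}σi permE unlift_funK.
Qed.

Section LastVertex.
Variable n : nat.
Implicit Types (s : 'S_n) (G T : graph n) (e : edge n).

Local Notation lift_last := (lift_perm ord_max ord_max).
Local Notation wid_graph G := (@wid_edge n @: G).

Lemma lift_ord_max (k : 'I_n) : lift ord_max k = wid k.
Proof. by apply: val_inj; rewrite /= /bump leqNgt ltn_ord. Qed.

Lemma wid_neq_ord_max (k : 'I_n) : wid k != ord_max.
Proof. by rewrite -val_eqE /= neq_ltn ltn_ord. Qed.

Lemma wid_edge_inj : injective (@wid_edge n).
Proof. by case=> [a1 a2] [b1 b2] [/val_inj-> /val_inj->]. Qed.

Lemma act_edge_lift_last s e :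
  act_edge (lift_last s) (wid_edge e) = wid_edge (act_edge s e).
Proof.
rewrite !act_edgeE /= -!lift_ord_max !lift_perm_lift !lift_ord_max /edge_of /=.
by case: ifP.
Qed.

Lemma act_graph_lift_last s G :
  act_graph (lift_last s) (wid_graph G) = wid_graph (act_graph s G).
Proof.
by rewrite /act_graph -!imset_comp; apply: eq_imset => e /=; rewrite act_edge_lift_last.
Qed.

Lemma sorted_edges_wid G :
  sorted_edges (wid_graph G) = map (@wid_edge n) (sorted_edges G).
Proof.
apply/esym/sorted_edges_unique.
- by rewrite map_inj_uniq ?uniq_sorted_edges //; apply: wid_edge_inj.
- move=> e; apply/mapP/imsetP => -[x x_G ->]; exists x => //.
    by rewrite -mem_sorted_edges.
  by rewrite mem_sorted_edges.
by rewrite sorted_map; apply: sorted_sorted_edges.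
Qed.

Lemma inv_count_wid (u : seq (edge n)) :
  inv_count (map (@wid_edge n) u) = inv_count u.
Proof. by elim: u => //= e u ->; rewrite count_map. Qed.

Lemma act_sign_lift_last s G : act_sign (lift_last s) (wid_graph G) = act_sign s G.
Proof.
rewrite /act_sign odd_lift_perm addbb sorted_edges_wid -map_comp.
by rewrite (eq_map (act_edge_lift_last s)) map_comp inv_count_wid.
Qed.

Lemma isolated_wid_ord_max G : isolated (wid_graph G) ord_max.
Proof.
by apply/forall_inP => _ /imsetP[e _ ->]; rewrite !wid_neq_ord_max.
Qed.

Lemma wf_graph_wid G : wf_graph (wid_graph G) = wf_graph G.
Proof.
apply/wf_graphP/wf_graphP => wfG e; first by move/(imset_f (@wid_edge n))/wfG.
by case/imsetP=> e' /wfG ? ->.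
Qed.

Lemma neq_ord_max_wid (x : 'I_n.+1) : x != ord_max -> exists k, x = wid k.
Proof.
by case: (unliftP ord_max x) => [k|] ->; [exists k; rewrite lift_ord_max | rewrite eqxx].
Qed.

Lemma del_lastK (G : graph n.+1) : isolated G ord_max -> wid_graph (del_last G) = G.
Proof.
move/forall_inP=> isoG; apply/setP => e; apply/imsetP/idP => [[e' e'_G ->]|e_G].
  by rewrite inE in e'_G.
case: e e_G => x y xy_G.
have /= /andP[/neq_ord_max_wid[a xa] /neq_ord_max_wid[b yb]] := isoG _ xy_G.
by subst x y; exists (a, b); rewrite ?inE.
Qed.

Lemma sum_orbit_wid (R : Type) (idx : R) (op : Monoid.com_law idx)
    (F : 'S_n.+1 -> R) G T :
  wf_graph G -> (forall v, isolated (wid_graph G) v -> v = ord_max) ->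
  \big[op/idx]_(σ | act_graph σ (wid_graph G) == wid_graph T) F σ =
  \big[op/idx]_(s | act_graph s G == T) F (lift_last s).
Proof.
move=> wfG iso_max.
pose fixes_last (σ : 'S_n.+1) := σ ord_max == ord_max.
rewrite (eq_bigl (fun σ => fixes_last σ &&
                           (act_graph σ (wid_graph G) == wid_graph T))).
  rewrite big_fix_lift_perm; apply: eq_bigl => s.
  by rewrite act_graph_lift_last (inj_eq (imset_inj wid_edge_inj)).
move=> σ; rewrite /fixes_last; case: eqP => [/= σT|]; last by rewrite andbF.
have := isolated_wid_ord_max T; rewrite -σT => /isolated_act_graphV.
by rewrite wf_graph_wid => /(_ wfG)/iso_max/(canRL (permKV σ))<-; rewrite eqxx.
Qed.

Lemma res_alpha_wid G : wf_graph G ->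
  (forall v, isolated (wid_graph G) v -> v = ord_max) ->
  res (alpha (wid_graph G)) = alpha G.
Proof.
move=> wfG iso_max; have wfG' : wf_graph (wid_graph G) by rewrite wf_graph_wid.
have card_Stab : #|Stab (wid_graph G)| = #|Stab G|.
  rewrite -!sum1_card (eq_bigl [pred σ | act_graph σ (wid_graph G) == wid_graph G]).
    by rewrite sum_orbit_wid //; apply: eq_bigl => s; rewrite /Stab in_set.
  by move=> σ; rewrite /Stab in_set.
apply/ffunP => S; rewrite ffunE !alpha_coef // card_Stab sum_orbit_wid //.
by congr (_ * _); apply: eq_bigr => s _; apply: act_sign_lift_last.
Qed.

Lemma res_alpha_del_last (G : graph n.+1) : wf_graph G -> isolated G ord_max ->
  (forall v, isolated G v -> v = ord_max) -> res (alpha G) = alpha (del_last G).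
Proof.
move=> wfG iso iso_max; have := @res_alpha_wid (del_last G).
by rewrite del_lastK //; apply=> //; rewrite -wf_graph_wid del_lastK.
Qed.

Lemma res_alpha_eq0 (G : graph n.+1) : wf_graph G ->
  (forall v, ~~ isolated G v) -> res (alpha G) = 0.
Proof.
move=> wfG no_iso; apply/ffunP => S; rewrite ffunE [RHS]ffunE.
apply/eqP; apply: contraT => nz.
have [s sG_S] := alpha_neq0_orbit wfG nz.
have := isolated_wid_ord_max S; rewrite sG_S => /(isolated_act_graphV wfG).
by rewrite (negbTE (no_iso _)).
Qed.

End LastVertex.

Lemma res_span_alpha_eq0 n (s : seq (rat * graph n.+1)) :
  (forall p, p \in s -> wf_graph p.2 /\ isolated p.2 ord_max) ->
  res (\sum_(p <- s) p.1 *: alpha p.2) = 0 -> \sum_(p <- s) p.1 *: alpha p.2 = 0.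
Proof.
set x := \sum_(p <- s) _ => s_wf_iso res_x.
have x_coef E : x E = \sum_(p <- s) p.1 * alpha p.2 E.
  by rewrite sum_ffunE; apply: eq_bigr => p _; rewrite ffunE.
have x_act t E : wf_graph E -> x (act_graph t E) = act_sign t E * x E.
  move=> wfE; rewrite !x_coef big_distrr; apply: eq_big_seq => p /s_wf_iso[wf_p _].
  by rewrite alpha_act_graph // mulrCA.
have x_iso E : isolated E ord_max -> x E = 0.
  move=> iso_E; have := congr1 (fun y : Lambda n => y (del_last E)) res_x.
  by rewrite /= !ffunE del_lastK.
apply/ffunP => E; rewrite [RHS]ffunE; apply/eqP; apply: contraT => xE_neq0.
have /hasP[p p_s alpha_p_neq0] : has (fun p => alpha p.2 E != 0) s.
  apply: contraR xE_neq0 => /hasPn alpha_s_eq0; rewrite x_coef big1_seq //.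
  by move=> p /alpha_s_eq0; rewrite negbK => /eqP->; rewrite mulr0.
have [wf_p iso_p] := s_wf_iso p p_s.
have [σ E_σ] := alpha_neq0_orbit wf_p alpha_p_neq0.
have wfE : wf_graph E by rewrite E_σ wf_act_graph.
have := isolated_act_graph (tperm (σ ord_max) ord_max) (isolated_act_graph σ iso_p).
rewrite tpermL -E_σ => iso_tE.
move: (x_iso _ iso_tE); rewrite x_act // => /eqP.
by rewrite mulf_eq0 (negbTE (act_sign_neq0 _ _)) (negbTE xE_neq0).
Qed.

Theorem proposition2p22 (n : nat) (hn : (0 < n)%N) :
  (* no isolated vertex: restricts to 0 *)
  (forall G : graph n.+1, wf_graph G -> skew_invariant G ->
     (forall v, ~~ isolated G v) -> res (alpha G) = 0) /\
  (* exactly one isolated vertex (the last one, by the coherent choice of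
     representatives): restricts to alpha of the graph with it deleted *)
  (forall G : graph n.+1, wf_graph G -> skew_invariant G ->
     isolated G ord_max -> (forall v, isolated G v -> v = ord_max) ->
     res (alpha G) = alpha (del_last G)) /\
  (* injectivity on the span of such classes *)
  (forall s : seq (rat * graph n.+1),
     all (fun p => [&& wf_graph p.2, skew_invariant p.2, isolated p.2 ord_max &
                    [forall v, isolated p.2 v ==> (v == ord_max)]]) s ->
     res (\sum_(p <- s) p.1 *: alpha p.2) = 0 ->
     \sum_(p <- s) p.1 *: alpha p.2 = 0).
Proof.
split; [|split].
- by move=> G wfG _; apply: res_alpha_eq0.
- by move=> G wfG _; apply: res_alpha_del_last.
- move=> s /allP s_props; apply: res_span_alpha_eq0 => p /s_props.
  by case/and4P.
Qed.
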